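(* Let $F,G\colon\mathbb{C}^{a+b+1}\to\mathbb{C}^{A+B+1}$ be homogeneous polynomial maps (representing rational maps $\mathbb{P}^{a+b}\dashrightarrow\mathbb{P}^{A+B}$) each taking $HQ(a,b+1)$ to $HQ(A,B+1)$ where defined. Suppose there exist $\tau\in\operatorname{Aut}(HQ(a,b+1))$ and $\chi\in\operatorname{Aut}(HQ(A,B+1))$, represented by linear maps, with $F\circ\tau=\chi\circ G$. Let $q_F,q_G$ be the corresponding quotients. Then $\operatorname{gin}(\mathcal{I}(H(q_F)))=\operatorname{gin}(\mathcal{I}(H(q_G)))$.
   Context: For $Z\in\mathbb{C}^{a+b+1}$ with coordinates $Z_0,\dots,Z_{a+b}$, $\|Z\|_{b+1}^2=-\sum_{j=0}^{b}|Z_j|^2+\sum_{j=b+1}^{a+b}|Z_j|^2$ (similarly $\|W\|_{B+1}^2$ on $\mathbb{C}^{A+B+1}$). $HQ(a,b+1)=\{Z\in\mathbb{P}^{a+b}:\|Z\|_{b+1}^2=0\}$. $\operatorname{Aut}(HQ(a,b+1))$ consists of automorphisms of $\mathbb{P}^{a+b}$ given by invertible linear maps $T$ with $\|TZ\|_{b+1}^2=\lambda\|Z\|_{b+1}^2$ for some real $\lambda\neq0$. The quotient of $F$ is the bihomogeneous polynomial $q_F(Z,\bar Z)$ with $\|F(Z)\|_{B+1}^2=\|Z\|_{b+1}^2\,q_F(Z,\bar Z)$. A holomorphic decomposition of $q$ is $q(Z,\bar Z)=\|h_+(Z)\|^2-\|h_-(Z)\|^2$ with $h_\pm$ homogeneous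 polynomial maps whose components together are linearly independent; $H(q)=\{h_+,h_-\}$, and $\mathcal{I}(H(q))$ is the ideal generated by all components of $h_+,h_-$ (independent of the choice of decomposition). Monomial order on $Z_0,\dots,Z_n$: a fixed total order with $Z_0>\dots>Z_n$, multiplicative, and with lower total degree monomials larger. For homogeneous $P$, $\operatorname{in}(P)$ is its largest monomial with nonzero coefficient; $\operatorname{in}(\mathcal{I})$ is the ideal generated by $\operatorname{in}(P)$, $P\in\mathcal{I}$; $\operatorname{gin}(\mathcal{I})=\operatorname{in}(\mathcal{I}\circ T)$ for $T$ in the dense open set of invertible linear maps on which this is constant (Galligo's theorem). *)

(* The field is an arbitrary numClosedFieldType R
   (algebraically closed field with conjugation, e.g. the complex numbers). *)
From HB Require Import structures.
From mathcomp Require Import all_boot all_order all_algebra.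
Set Implicit Arguments. Unset Strict Implicit. Unset Printing Implicit Defensive.
Import Order.TTheory GRing.Theory Num.Theory.
Local Open Scope ring_scope.

Section MPoly.
Variable R : numClosedFieldType.
Variable I : finType.

Definition mono := {ffun I -> nat}.
Definition mono0 : mono := [ffun _ => 0%N].
Definition monoD (m1 m2 : mono) : mono := [ffun i => (m1 i + m2 i)%N].
Definition monoX (i : I) : mono := [ffun j => nat_of_bool (j == i)].
Definition mdeg (m : mono) : nat := (\sum_i m i)%N.
Definition mdvd (m1 m2 : mono) : Prop := forall i, (m1 i <= m2 i)%N.

(* a polynomial is a finite list of terms (coefficient, monomial);
   polynomials are compared through their coefficients *)
Definition mpoly := seq (R * mono).
Definition mcoef (p : mpoly) (m : mono) : R := \sum_(t <- p | t.2 == m) t.1.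
Definition mpeq (p q : mpoly) : Prop := forall m, mcoef p m = mcoef q m.
Definition mpnz (p : mpoly) : Prop := exists m, mcoef p m != 0.
Definition mpadd (p q : mpoly) : mpoly := p ++ q.
Definition mpscale (c : R) (p : mpoly) : mpoly := [seq (c * t.1, t.2) | t <- p].
Definition mpmul (p q : mpoly) : mpoly :=
  [seq (s.1 * t.1, monoD s.2 t.2) | s <- p, t <- q].
Definition mpone : mpoly := [:: (1, mono0)].
Definition mpsum (ps : seq mpoly) : mpoly := flatten ps.
Definition mpeval (p : mpoly) (x : I -> R) : R :=
  \sum_(t <- p) t.1 * \prod_i x i ^+ t.2 i.

Definition mphom (d : nat) (p : mpoly) : Prop :=
  forall m, mcoef p m != 0 -> mdeg m = d.
Definition mphomog (p : mpoly) : Prop := exists d, mphom d p.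

Definition in_ideal_gen (gens : seq mpoly) (p : mpoly) : Prop :=
  exists cs : seq mpoly, size cs = size gens /\
    mpeq p (mpsum [seq mpmul c.1 c.2 | c <- zip cs gens]).

Definition is_init (le : mono -> mono -> Prop) (p : mpoly) (m : mono) : Prop :=
  mcoef p m != 0 /\ forall m', mcoef p m' != 0 -> le m' m.

(* monomials of the initial ideal in(J) of a (homogeneous) ideal J,
   i.e. monomials divisible by in(P) for some nonzero homogeneous P in J *)
Definition in_ideal (le : mono -> mono -> Prop) (J : mpoly -> Prop) (m : mono) : Prop :=
  exists p m0, [/\ J p, mphomog p, mpnz p, is_init le p m0 & mdvd m0 m].

Definition monomial_order (le : mono -> mono -> Prop) : Prop :=
  [/\ (forall m, le m m),
      (forall m1 m2, le m1 m2 -> le m2 m1 -> m1 = m2),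
      (forall m1 m2 m3, le m1 m2 -> le m2 m3 -> le m1 m3),
      (forall m1 m2, le m1 m2 \/ le m2 m1) &
      (forall m1 m2 m, le m1 m2 -> le (monoD m1 m) (monoD m2 m)) ] /\
  (forall m1 m2, (mdeg m1 < mdeg m2)%N -> le m2 m1 /\ m1 <> m2).

End MPoly.

Arguments mono0 {I}.

Definition vars_ordered (n : nat) (le : mono 'I_n -> mono 'I_n -> Prop) : Prop :=
  forall i j : 'I_n, (i < j)%N -> le (monoX j) (monoX i) /\ monoX j <> monoX i.

Section Subst.
Variable R : numClosedFieldType.
Variable n : nat.

Definition lin_form (T : 'M[R]_n) (i : 'I_n) : mpoly R 'I_n :=
  [seq (T i j, monoX j) | j <- enum 'I_n].
Definition mpexp (p : mpoly R 'I_n) (k : nat) : mpoly R 'I_n :=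
  iter k (mpmul p) (mpone R 'I_n).
Definition subst_mono (T : 'M[R]_n) (m : mono 'I_n) : mpoly R 'I_n :=
  foldr (@mpmul R 'I_n) (mpone R 'I_n) [seq mpexp (lin_form T i) (m i) | i <- enum 'I_n].
(* (P o T)(Z) = P(T Z) *)
Definition subst (p : mpoly R 'I_n) (T : 'M[R]_n) : mpoly R 'I_n :=
  mpsum [seq mpscale t.1 (subst_mono T t.2) | t <- p].

Definition ideal_comp (J : mpoly R 'I_n -> Prop) (T : 'M[R]_n) (q : mpoly R 'I_n) : Prop :=
  exists p, J p /\ mpeq q (subst p T).

(* M = gin(J): there is a nonempty Zariski open set {det T <> 0, D(T) <> 0}
   of invertible linear maps on which in(J o T) equals M *)
Definition is_gin (le : mono 'I_n -> mono 'I_n -> Prop) (J : mpoly R 'I_n -> Prop)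
    (M : mono 'I_n -> Prop) : Prop :=
  exists D : mpoly R ('I_n * 'I_n)%type, mpnz D /\
    forall T : 'M[R]_n, \det T != 0 -> mpeval D (fun ij => T ij.1 ij.2) != 0 ->
      forall m, @in_ideal R _ le (ideal_comp J T) m <-> M m.

Definition mxapp (T : 'M[R]_n) (Z : 'I_n -> R) : 'I_n -> R :=
  fun i => \sum_j T i j * Z j.
End Subst.

Definition hnorm (R : numClosedFieldType) (b n : nat) (Z : 'I_n -> R) : R :=
  \sum_(i < n) (if (i <= b)%N then -1 else 1) * (Z i * (Z i)^*).

Section Maps.
Variable R : numClosedFieldType.
Variables (a b A B : nat).
Local Notation n := (a + b + 1)%N.
Local Notation N := (A + B + 1)%N.

Definition mapeval (F : 'I_N -> mpoly R 'I_n) (Z : 'I_n -> R) : 'I_N -> R :=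
  fun i => mpeval (F i) Z.

Definition hom_map (F : 'I_N -> mpoly R 'I_n) : Prop :=
  (exists d, forall i, mphom d (F i)) /\ (exists i, mpnz (F i)).

Definition maps_HQ (F : 'I_N -> mpoly R 'I_n) : Prop :=
  forall Z : 'I_n -> R, hnorm b Z = 0 -> (exists i, mapeval F Z i != 0) ->
    hnorm B (mapeval F Z) = 0.

Definition isAutHQ (c k : nat) (T : 'M[R]_k) : Prop :=
  T \in unitmx /\ exists lam : R, [/\ lam \is Num.real, lam != 0 &
    forall Z, hnorm c (mxapp T Z) = lam * hnorm c Z].

(* hp, hm are the component lists of a holomorphic decomposition of the
   quotient q_F : ||F(Z)||^2 = ||Z||^2 q_F(Z,Zbar), q_F = ||hp||^2 - ||hm||^2 *)
Definition holo_decomp_quot (F : 'I_N -> mpoly R 'I_n) (hp hm : seq (mpoly R 'I_n)) : Prop :=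
  [/\ (exists d, forall h, h \in hp ++ hm -> mphom d h),
      (forall cs : seq R, size cs = size (hp ++ hm) ->
         mpeq (mpsum [seq mpscale c.1 c.2 | c <- zip cs (hp ++ hm)]) [::] ->
         all (fun c => c == 0) cs) &
      forall Z : 'I_n -> R,
        hnorm B (mapeval F Z) =
        hnorm b Z * (\sum_(h <- hp) mpeval h Z * (mpeval h Z)^*
                     - \sum_(h <- hm) mpeval h Z * (mpeval h Z)^*) ].
End Maps.

Arguments maps_HQ {R a} b {A} B F.
Arguments holo_decomp_quot {R a} b {A} B F hp hm.
Arguments isAutHQ {R} c {k} T.
Arguments hom_map {R a b A B} F.
Arguments mapeval {R a b A B} F Z _.

(* Composing with tau only rescales the defining identities: ||tau Z||^2 = lt ||Z||^2 and
   ||F(tau Z)||^2 = ||chi G(Z)||^2 = lc ||G(Z)||^2, hence ||Z||^2 (lt q_F(tau Z) - lc q_G(Z)) = 0.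
   Since ||Z||^2 is not identically zero, the Hermitian polynomial lt q_F o tau - lc q_G vanishes,
   and so does its polarization. By linear independence of the components of each decomposition,
   the components of H(q_G) and of H(q_F) o tau then span the same space, so that
   I(H(q_F)) o tau = I(H(q_G)). Finally, a matrix T generic for I(H(q_G)) can be chosen with
   tau T generic for I(H(q_F)), because nonempty Zariski open sets meet; this identifies the two
   generic initial ideals. *)

From HB Require Import structures.
From mathcomp Require Import all_boot all_order all_algebra.
From mathcomp Require Import perm zify ring.
From Stdlib Require Import Classical FunctionalExtensionality.
Set Implicit Arguments. Unset Strict Implicit. Unset Printing Implicit Defensive.
Import Order.TTheory GRing.Theory Num.Theory.
Local Open Scope ring_scope.

Section Evaluation.
Variables (R : numClosedFieldType) (I : finType).
Implicit Types (p q : mpoly R I) (x : I -> R) (m : mono I).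

Definition mmon x m : R := \prod_i x i ^+ m i.

Lemma mpevalE p x : mpeval p x = \sum_(t <- p) t.1 * mmon x t.2.
Proof. by []. Qed.

Lemma mmon0 x : mmon x mono0 = 1.
Proof. by rewrite /mmon big1 // => i _; rewrite ffunE expr0. Qed.

Lemma mmonD x m1 m2 : mmon x (monoD m1 m2) = mmon x m1 * mmon x m2.
Proof. by rewrite /mmon -big_split; apply: eq_bigr => i _; rewrite ffunE exprD. Qed.

Lemma mmonX x j : mmon x (monoX j) = x j.
Proof.
rewrite /mmon (bigD1 j) //= big1 ?mulr1; first by rewrite ffunE eqxx expr1.
by move=> i /negbTE Hi; rewrite ffunE Hi expr0.
Qed.

Lemma mpeval0 x : mpeval [::] x = 0.
Proof. by rewrite /mpeval big_nil. Qed.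

Lemma mpeval_cat p q x : mpeval (p ++ q) x = mpeval p x + mpeval q x.
Proof. by rewrite /mpeval big_cat. Qed.

Lemma mpeval_scale c p x : mpeval (mpscale c p) x = c * mpeval p x.
Proof.
by rewrite /mpeval big_map mulr_sumr; apply: eq_bigr => t _; rewrite mulrA.
Qed.

Lemma mpeval_mul p q x : mpeval (mpmul p q) x = mpeval p x * mpeval q x.
Proof.
rewrite /mpeval big_allpairs_dep /= mulr_suml; apply: eq_bigr => s _.
rewrite mulr_sumr; apply: eq_bigr => t _ /=.
rewrite -/(mmon x (monoD s.2 t.2)) mmonD /mmon; ring.
Qed.

Lemma mpeval_const c x : mpeval [:: (c, mono0)] x = c.
Proof. by rewrite mpevalE big_seq1 mmon0 mulr1. Qed.

Lemma mpeval1 x : mpeval (mpone R I) x = 1.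
Proof. exact: mpeval_const. Qed.

Lemma mpeval_var j x : mpeval [:: (1, monoX j)] x = x j.
Proof. by rewrite mpevalE big_seq1 mmonX mul1r. Qed.

Lemma mpeval_sum (ps : seq (mpoly R I)) x :
  mpeval (mpsum ps) x = \sum_(p <- ps) mpeval p x.
Proof. by rewrite /mpeval big_flatten. Qed.

Lemma mpeval_lincomb (J : finType) (c : J -> R) (h : J -> mpoly R I) x :
  mpeval (mpsum [seq mpscale (c j) (h j) | j <- enum J]) x =
  \sum_j c j * mpeval (h j) x.
Proof.
by rewrite mpeval_sum big_map big_enum; apply: eq_bigr => j _; rewrite mpeval_scale.
Qed.

Lemma mcoef_cat p q m : mcoef (p ++ q) m = mcoef p m + mcoef q m.
Proof. by rewrite /mcoef big_cat. Qed.

Lemma mcoef_scale c p m : mcoef (mpscale c p) m = c * mcoef p m.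
Proof. by rewrite /mcoef big_map mulr_sumr. Qed.

Lemma mcoef_notin p m : m \notin [seq t.2 | t <- p] -> mcoef p m = 0.
Proof.
move=> Hm; rewrite /mcoef big_seq_cond big1 // => t /andP [Ht /eqP E].
by case/negP: Hm; rewrite -E; apply: map_f.
Qed.

Lemma mcoef_neq0_mem p m : mcoef p m != 0 -> m \in [seq t.2 | t <- p].
Proof. by apply: contraR => /mcoef_notin ->. Qed.

Lemma sum_terms_mcoef p (s : seq (mono I)) (g : mono I -> R) :
  uniq s -> (forall t, t \in p -> t.2 \in s) ->
  \sum_(t <- p) t.1 * g t.2 = \sum_(m <- s) mcoef p m * g m.
Proof.
move=> Us; elim: p => [|t p IH] Hs.
  by rewrite big_nil big1_seq // => m _; rewrite /mcoef big_nil mul0r.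
rewrite big_cons IH; last by move=> u Hu; apply: Hs; rewrite in_cons Hu orbT.
have Ht : t.2 \in s by apply: Hs; rewrite in_cons eqxx.
rewrite [RHS](eq_bigr (fun m => ((t.2 == m)%:R * t.1) * g m + mcoef p m * g m)).
  rewrite big_split /=; congr (_ + _); symmetry.
  rewrite (bigD1_seq t.2) //= eqxx mul1r big1 ?addr0 // => m /negbTE Hm.
  by rewrite eq_sym Hm mul0r mul0r.
move=> m _; rewrite /mcoef big_cons /=.
by case: eqP => _; rewrite ?mul1r ?mul0r ?add0r // mulrDl.
Qed.

Lemma mpeval_eq0 p : (forall m, mcoef p m = 0) -> forall x, mpeval p x = 0.
Proof.
move=> H x; rewrite mpevalE (@sum_terms_mcoef _ (undup [seq t.2 | t <- p])).
- by rewrite big1 // => m _; rewrite H mul0r.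
- exact: undup_uniq.
by move=> t Ht; rewrite mem_undup map_f.
Qed.

Lemma mpeq_eval p q : mpeq p q -> forall x, mpeval p x = mpeval q x.
Proof.
move=> H x; set s := undup [seq t.2 | t <- p ++ q].
have Hs r : (forall t, t \in r -> t \in p ++ q) -> forall t, t \in r -> t.2 \in s.
  by move=> Hr t Ht; rewrite mem_undup map_f ?Hr.
rewrite !mpevalE !(@sum_terms_mcoef _ s) ?undup_uniq //; last 2 first.
- by apply: Hs => t Ht; rewrite mem_cat Ht orbT.
- by apply: Hs => t Ht; rewrite mem_cat Ht.
by apply: eq_bigr => m _; rewrite H.
Qed.

End Evaluation.

Definition radix_val (K N : nat) (f : 'I_N -> nat) : nat := (\sum_(j < N) f j * K ^ j)%N.

Lemma radix_val_lt K N (f : 'I_N -> nat) :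
  (forall j, f j < K)%N -> (radix_val K f < K ^ N)%N.
Proof.
elim: N f => [|N IH] f Hf; first by rewrite /radix_val big_ord0 expn0.
rewrite /radix_val big_ord_recr /= expnS.
have := IH (fun j => f (widen_ord (leqnSn N) j)) (fun j => Hf _).
rewrite /radix_val; set s := (\sum_(i < N) _)%N => Hs.
have := Hf ord_max; set X := (K ^ N)%N; nia.
Qed.

Lemma radix_val_inj K N (f g : 'I_N -> nat) :
  (forall j, f j < K)%N -> (forall j, g j < K)%N -> radix_val K f = radix_val K g -> f =1 g.
Proof.
elim: N f g => [|N IH] f g Hf Hg E j; first by case: j.
move: E; rewrite /radix_val !big_ord_recr /=.
have Lf := radix_val_lt (fun j => Hf (widen_ord (leqnSn N) j)).
have Lg := radix_val_lt (fun j => Hg (widen_ord (leqnSn N) j)).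
move: Lf Lg; rewrite /radix_val.
set u := (\sum_(i < N) _)%N; set v := (\sum_(i < N) _)%N => Lf Lg E.
have Euv : u = v.
  have := congr1 (fun z => z %% K ^ N)%N E => /=.
  by rewrite ![(_ + f _ * _)%N]addnC ![(_ + g _ * _)%N]addnC !modnMDl !modn_small.
have KN_gt0 : (0 < K ^ N)%N by rewrite expn_gt0 (leq_ltn_trans (leq0n _) (Hf ord_max)).
have [jN|jN] := ltnP j N.
  have -> : j = widen_ord (leqnSn N) (Ordinal jN) by apply: val_inj.
  exact: (IH _ _ (fun j => Hf _) (fun j => Hg _) Euv).
have -> : j = ord_max by apply: val_inj => /=; have := ltn_ord j; lia.
by move: E; rewrite Euv => /addnI /eqP; rewrite eqn_pmul2r // => /eqP.
Qed.

Lemma natr_inj (R : numDomainType) : injective (fun k : nat => k%:R : R).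
Proof. by move=> i j /eqP; rewrite eqr_nat => /eqP. Qed.

Lemma poly_eq0_of_roots (R : idomainType) (r : {poly R}) (w : nat -> R) N :
  injective w -> (size r <= N)%N -> (forall k, (k < N)%N -> r.[w k] = 0) -> r = 0.
Proof.
move=> Hw Hs Hr; apply/eqP; apply: contraT => r0.
have := max_poly_roots (rs := map w (iota 0 N)) r0.
rewrite map_inj_uniq // iota_uniq size_map size_iota ltnNge Hs => H.
apply: H => //; apply/allP => z /mapP [k]; rewrite mem_iota add0n => /andP [_ Hk] ->.
exact/rootP/Hr.
Qed.

Lemma poly_eq0_of_nat_roots (R : numDomainType) (r : {poly R}) :
  (forall k : nat, r.[k%:R] = 0) -> r = 0.
Proof. by move=> H; apply: (poly_eq0_of_roots (@natr_inj R) (leqnn _)) => k _. Qed.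

Section Kronecker.
Variables (R : numClosedFieldType) (I : finType).
Implicit Types (p q : mpoly R I) (m : mono I).

(* Kronecker substitution x_i := s ^ (K ^ i): for exponents below K it is injective on monomials. *)
Definition kron_exp (K : nat) m : nat := (\sum_i m i * K ^ enum_rank i)%N.
Definition kron_pt (K : nat) (s : R) : I -> R := fun i => s ^+ (K ^ enum_rank i).
Definition kron_poly (K : nat) p : {poly R} := \sum_(t <- p) t.1 *: 'X^(kron_exp K t.2).
Definition exps_below (K : nat) p := forall t, t \in p -> forall i, (t.2 i < K)%N.
Definition max_exp p : nat := (\max_(t <- p) \max_i t.2 i)%N.

Lemma kron_expE K m : kron_exp K m = radix_val K (fun j : 'I_#|I| => m (enum_val j)).
Proof.
rewrite /kron_exp /radix_val (big_enum_val (A:=I)) /=.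
by apply: eq_bigr => j _; rewrite enum_valK.
Qed.

Lemma kron_exp_inj K m1 m2 : (forall i, m1 i < K)%N -> (forall i, m2 i < K)%N ->
  kron_exp K m1 = kron_exp K m2 -> m1 = m2.
Proof.
move=> H1 H2; rewrite !kron_expE => /radix_val_inj E; apply/ffunP => i.
by have := E (fun j => H1 _) (fun j => H2 _) (enum_rank i); rewrite enum_rankK.
Qed.

Lemma kron_exp_lt K m : (forall i, m i < K)%N -> (kron_exp K m < K ^ #|I|)%N.
Proof. by move=> H; rewrite kron_expE; apply: radix_val_lt. Qed.

Lemma horner_kron_poly K p s : (kron_poly K p).[s] = mpeval p (kron_pt K s).
Proof.
rewrite /kron_poly horner_sum mpevalE; apply: eq_bigr => t _.
rewrite hornerZ hornerXn /mmon /kron_pt /kron_exp -prodrXr.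
by congr (_ * _); apply: eq_bigr => i _; rewrite -exprM mulnC.
Qed.

Lemma coef_kron_poly K p m : exps_below K p -> (forall i, m i < K)%N ->
  (kron_poly K p)`_(kron_exp K m) = mcoef p m.
Proof.
move=> Hp Hm; rewrite /kron_poly coef_sum /mcoef [RHS]big_mkcond /= !big_seq.
apply: eq_bigr => t Ht; rewrite coefZ coefXn.
have -> : (kron_exp K m == kron_exp K t.2) = (t.2 == m).
  by apply/eqP/eqP => [E|->] //; apply: kron_exp_inj => //; exact: Hp.
by case: (t.2 == m); rewrite ?mulr1 ?mulr0.
Qed.

Lemma size_kron_poly K p : exps_below K p -> (size (kron_poly K p) <= K ^ #|I|)%N.
Proof.
move=> Hp; rewrite /kron_poly; apply: (leq_trans (size_sum _ _ _)).
apply/bigmax_leqP_seq => t Ht _; apply: (leq_trans (size_scale_leq _ _)).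
by rewrite size_polyXn; apply: kron_exp_lt => i; apply: Hp.
Qed.

Lemma exps_below_max_exp K p : (max_exp p < K)%N -> exps_below K p.
Proof.
move=> HK t Ht i; apply: leq_ltn_trans HK; apply: leq_trans (leq_bigmax i) _.
exact: (@leq_bigmax_seq _ p xpredT (fun t : R * mono I => \max_i t.2 i) t Ht isT).
Qed.

Lemma exps_below_mem K p m : exps_below K p -> m \in [seq t.2 | t <- p] ->
  forall i, (m i < K)%N.
Proof. by move=> Hp /mapP [t Ht ->]; apply: Hp. Qed.

Lemma kron_poly_neq0 K p m : exps_below K p -> mcoef p m != 0 -> kron_poly K p != 0.
Proof.
move=> Hp Hm; have Em := coef_kron_poly Hp (exps_below_mem Hp (mcoef_neq0_mem Hm)).
by apply: contraNneq Hm => E; rewrite -Em E coef0.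
Qed.

Lemma mcoef_eq0_of_mpeval p : (forall x, mpeval p x = 0) -> forall m, mcoef p m = 0.
Proof.
move=> H m; apply/eqP; apply: contraT => Hm.
have Hp := exps_below_max_exp (ltnSn (max_exp p)).
case/negP: (kron_poly_neq0 Hp Hm); apply/eqP.
by apply: poly_eq0_of_nat_roots => k; rewrite horner_kron_poly H.
Qed.

Lemma mpeq_of_eval p q : (forall x, mpeval p x = mpeval q x) -> mpeq p q.
Proof.
move=> H m; apply/eqP; rewrite -subr_eq0.
have H0 x : mpeval (p ++ mpscale (-1) q) x = 0.
  by rewrite mpeval_cat mpeval_scale H mulN1r subrr.
by have := mcoef_eq0_of_mpeval H0 m; rewrite mcoef_cat mcoef_scale mulN1r => ->.
Qed.

Lemma mpnz_of_eval p x : mpeval p x != 0 -> mpnz p.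
Proof.
move=> Hx; apply: NNPP => Hn; case/negP: Hx; apply/eqP; apply: mpeval_eq0 => m.
by apply/eqP; apply: contraT => Hm; case: Hn; exists m.
Qed.

Lemma mpnz_common_nonroot p q : mpnz p -> mpnz q ->
  exists x, mpeval p x != 0 /\ mpeval q x != 0.
Proof.
move=> [mp Hmp] [mq Hmq]; set K := (maxn (max_exp p) (max_exp q)).+1.
have Hp : exps_below K p by apply: exps_below_max_exp; rewrite ltnS leq_maxl.
have Hq : exps_below K q by apply: exps_below_max_exp; rewrite ltnS leq_maxr.
have pq0 : kron_poly K p * kron_poly K q != 0.
  by rewrite mulf_neq0 // (kron_poly_neq0 Hp Hmp, kron_poly_neq0 Hq Hmq).
have [k Hk] : exists k : nat, (kron_poly K p * kron_poly K q).[k%:R] != 0.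
  apply: NNPP => Hn; case/negP: pq0; apply/eqP/poly_eq0_of_nat_roots => k.
  by apply/eqP; apply: contraT => Hk; case: Hn; exists k.
exists (kron_pt K k%:R); move: Hk.
by rewrite hornerM !horner_kron_poly mulf_eq0 negb_or => /andP.
Qed.

Lemma mpeval_eq0_on_kron_grid K p : exps_below K p ->
  (forall k, (k < K ^ #|I|)%N -> mpeval p (kron_pt K k%:R) = 0) ->
  forall x, mpeval p x = 0.
Proof.
move=> Hp H; apply: mpeval_eq0 => m.
have r0 : kron_poly K p = 0.
  apply: (poly_eq0_of_roots (@natr_inj R) (size_kron_poly Hp)) => k Hk.
  by rewrite horner_kron_poly H.
have [Hm|Hm] := boolP (m \in [seq t.2 | t <- p]); last exact: mcoef_notin.
by rewrite -(coef_kron_poly Hp (exps_below_mem Hp Hm)) r0 coef0.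
Qed.

End Kronecker.

Section Substitution.
Variables (R : numClosedFieldType) (n : nat).

Lemma mxappM (S T : 'M[R]_n) Z : mxapp (S *m T) Z = mxapp S (mxapp T Z).
Proof.
apply: functional_extensionality => i; rewrite /mxapp.
under eq_bigr => j _ do rewrite mxE mulr_suml.
rewrite exchange_big /=; apply: eq_bigr => k _; rewrite mulr_sumr.
by apply: eq_bigr => j _; rewrite mulrA.
Qed.

Lemma mxapp1 Z : mxapp (1%:M : 'M[R]_n) Z = Z.
Proof.
apply: functional_extensionality => i; rewrite /mxapp (bigD1 i) //= big1 ?addr0.
  by rewrite mxE eqxx mul1r.
by move=> j /negbTE Hj; rewrite mxE eq_sym Hj mul0r.
Qed.

Lemma mxappKV (T : 'M[R]_n) Z : T \in unitmx -> mxapp T (mxapp (invmx T) Z) = Z.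
Proof. by move=> UT; rewrite -mxappM mulmxV // mxapp1. Qed.

Lemma mpeval_subst (p : mpoly R 'I_n) (T : 'M[R]_n) Z :
  mpeval (subst p T) Z = mpeval p (mxapp T Z).
Proof.
have lin i : mpeval (lin_form T i) Z = mxapp T Z i.
  by rewrite mpevalE big_map big_enum; apply: eq_bigr => j _; rewrite mmonX.
have exp q k : mpeval (mpexp q k) Z = mpeval q Z ^+ k.
  by elim: k => [|k IH]; rewrite ?mpeval1 // /mpexp iterS mpeval_mul IH exprS.
have prod (s : seq 'I_n) (f : 'I_n -> mpoly R 'I_n) :
    mpeval (foldr (@mpmul R 'I_n) (mpone R 'I_n) (map f s)) Z = \prod_(i <- s) mpeval (f i) Z.
  by elim: s => [|i s IH]; rewrite ?big_nil ?mpeval1 //= mpeval_mul IH big_cons.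
rewrite /subst mpeval_sum big_map mpevalE; apply: eq_bigr => t _.
rewrite mpeval_scale /subst_mono prod big_enum; congr (_ * _).
by apply: eq_bigr => i _; rewrite exp lin.
Qed.

End Substitution.

Section PolyFun.
Variables (R : numClosedFieldType) (J : finType).

Definition poly_fun (f : (J -> R) -> R) := exists p : mpoly R J, forall x, mpeval p x = f x.

Lemma poly_fun_const c : poly_fun (fun _ => c).
Proof. by exists [:: (c, mono0)] => x; rewrite mpeval_const. Qed.

Lemma poly_fun_var j : poly_fun (fun x => x j).
Proof. by exists [:: (1, monoX j)] => x; rewrite mpeval_var. Qed.

Lemma poly_funD f g : poly_fun f -> poly_fun g -> poly_fun (fun x => f x + g x).
Proof. by move=> [p Hp] [q Hq]; exists (p ++ q) => x; rewrite mpeval_cat Hp Hq. Qed.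

Lemma poly_funM f g : poly_fun f -> poly_fun g -> poly_fun (fun x => f x * g x).
Proof. by move=> [p Hp] [q Hq]; exists (mpmul p q) => x; rewrite mpeval_mul Hp Hq. Qed.

Lemma poly_fun_sum (A : Type) (s : seq A) (F : A -> (J -> R) -> R) :
  (forall a, poly_fun (F a)) -> poly_fun (fun x => \sum_(a <- s) F a x).
Proof.
move=> H; elim: s => [|a s [p Hp]].
  by have [p Hp] := poly_fun_const 0; exists p => x; rewrite Hp big_nil.
by have [q Hq] := poly_funD (H a) (ex_intro _ p Hp); exists q => x; rewrite Hq big_cons.
Qed.

Lemma poly_fun_prod (A : Type) (s : seq A) (F : A -> (J -> R) -> R) :
  (forall a, poly_fun (F a)) -> poly_fun (fun x => \prod_(a <- s) F a x).
Proof.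
move=> H; elim: s => [|a s [p Hp]].
  by have [p Hp] := poly_fun_const 1; exists p => x; rewrite Hp big_nil.
by have [q Hq] := poly_funM (H a) (ex_intro _ p Hp); exists q => x; rewrite Hq big_cons.
Qed.

Lemma poly_fun_comp (K : finType) (q : mpoly R K) (g : K -> (J -> R) -> R) :
  (forall k, poly_fun (g k)) -> poly_fun (fun x => mpeval q (fun k => g k x)).
Proof.
move=> H; apply: poly_fun_sum => t; apply: poly_funM; first exact: poly_fun_const.
apply: poly_fun_prod => k; elim: (t.2 k) => [|e [p Hp]].
  by have [p Hp] := poly_fun_const 1; exists p => x; rewrite Hp expr0.
by have [r Hr] := poly_funM (H k) (ex_intro _ p Hp); exists r => x; rewrite Hr exprS.
Qed.

Lemma poly_fun_common_nonroot f g : poly_fun f -> poly_fun g ->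
  (exists x, f x != 0) -> (exists x, g x != 0) -> exists x, f x != 0 /\ g x != 0.
Proof.
move=> [p Hp] [q Hq] [x Hx] [y Hy].
have np : mpnz p by apply: (mpnz_of_eval (x := x)); rewrite Hp.
have nq : mpnz q by apply: (mpnz_of_eval (x := y)); rewrite Hq.
by have [z] := mpnz_common_nonroot np nq; rewrite Hp Hq; exists z.
Qed.

End PolyFun.

Section GenericMatrix.
Variables (R : numClosedFieldType) (n : nat).

Definition mx_entries (T : 'M[R]_n) : 'I_n * 'I_n -> R := fun ij => T ij.1 ij.2.
Definition mx_of (x : 'I_n * 'I_n -> R) : 'M[R]_n := \matrix_(i, j) x (i, j).

Lemma mx_ofK : cancel mx_of mx_entries.
Proof. by move=> x; apply: functional_extensionality => -[i j]; rewrite /mx_entries mxE. Qed.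

Lemma mx_entriesK : cancel mx_entries mx_of.
Proof. by move=> T; apply/matrixP => i j; rewrite mxE. Qed.

Lemma poly_fun_det : poly_fun (fun x => \det (mx_of x)).
Proof.
apply: poly_fun_sum => s; apply: poly_funM; first exact: poly_fun_const.
apply: poly_fun_prod => i; have [p Hp] := @poly_fun_var R _ (i, s i).
by exists p => x; rewrite Hp mxE.
Qed.

Lemma poly_fun_mulmx (S : 'M[R]_n) (D : mpoly R ('I_n * 'I_n)%type) :
  poly_fun (fun x => mpeval D (mx_entries (S *m mx_of x))).
Proof.
apply: poly_fun_comp => -[i j]; have [p Hp] : poly_fun (fun x => \sum_k S i k * x (k, j)).
  by apply: poly_fun_sum => k; apply: poly_funM; [exact: poly_fun_const | exact: poly_fun_var].
by exists p => x; rewrite Hp /mx_entries mxE; apply: eq_bigr => k _; rewrite mxE.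
Qed.

Lemma exists_generic_mx (S : 'M[R]_n) (D1 D2 : mpoly R ('I_n * 'I_n)%type) :
  S \in unitmx -> mpnz D1 -> mpnz D2 ->
  exists T : 'M[R]_n, [/\ \det T != 0, mpeval D2 (mx_entries T) != 0
                        & mpeval D1 (mx_entries (S *m T)) != 0].
Proof.
move=> US D1nz D2nz.
have det1 : exists x, \det (mx_of x) != 0.
  by exists (mx_entries 1%:M); rewrite mx_entriesK det1 oner_eq0.
have D2pt : exists x, mpeval D2 x != 0.
  by have [x [Hx _]] := mpnz_common_nonroot D2nz D2nz; exists x.
have D1pt : exists x, mpeval D1 (mx_entries (S *m mx_of x)) != 0.
  have [y [Hy _]] := mpnz_common_nonroot D1nz D1nz.
  by exists (mx_entries (invmx S *m mx_of y)); rewrite mx_entriesK mulKVmx // mx_ofK.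
have D2fun : poly_fun (mpeval D2) by exists D2.
have [x [Hdet HD2]] := poly_fun_common_nonroot poly_fun_det D2fun det1 D2pt.
have [y [Hy HD1]] := poly_fun_common_nonroot (poly_funM poly_fun_det D2fun)
  (poly_fun_mulmx S D1) (ex_intro _ x (mulf_neq0 Hdet HD2)) D1pt.
move: Hy; rewrite mulf_eq0 negb_or => /andP [Hy1 Hy2].
by exists (mx_of y); rewrite mx_ofK.
Qed.

End GenericMatrix.

Section Ideals.
Variables (R : numClosedFieldType) (I : finType).
Local Notation mp := (mpoly R I).

Definition gen_comb (L : seq mp) (c : 'I_(size L) -> mp) : mp :=
  mpsum [seq mpmul (c i) (nth [::] L i) | i <- enum 'I_(size L)].
Arguments gen_comb : clear implicits.

Lemma mpeval_gen_comb L c x :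
  mpeval (gen_comb L c) x = \sum_i mpeval (c i) x * mpeval (nth [::] L i) x.
Proof.
by rewrite mpeval_sum big_map big_enum; apply: eq_bigr => i _; rewrite mpeval_mul.
Qed.

Lemma in_ideal_genP (L : seq mp) p :
  in_ideal_gen L p <-> exists c : 'I_(size L) -> mp,
    forall x, mpeval p x = \sum_i mpeval (c i) x * mpeval (nth [::] L i) x.
Proof.
have zipE (cs : seq mp) x : size cs = size L ->
    mpeval (mpsum [seq mpmul c.1 c.2 | c <- zip cs L]) x =
    \sum_(i < size L) mpeval (nth [::] cs i) x * mpeval (nth [::] L i) x.
  move=> Hs; rewrite mpeval_sum big_map (big_nth ([::], [::])) size_zip Hs minnn big_mkord.
  by apply: eq_bigr => i _; rewrite nth_zip // mpeval_mul.
split=> [[cs [Hs Hp]]|[c Hc]].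
  by exists (fun i => nth [::] cs i) => x; rewrite (mpeq_eval Hp) zipE.
have Hs : size [seq c i | i <- enum 'I_(size L)] = size L by rewrite size_map size_enum_ord.
exists [seq c i | i <- enum 'I_(size L)]; split => //.
apply: mpeq_of_eval => x; rewrite Hc zipE //; apply: eq_bigr => i _.
by rewrite (nth_map i) ?size_enum_ord // nth_ord_enum.
Qed.

Lemma in_ideal_gen_comb L c : in_ideal_gen L (gen_comb L c).
Proof. by apply/in_ideal_genP; exists c => x; rewrite mpeval_gen_comb. Qed.

Lemma in_ideal_iff (le : mono I -> mono I -> Prop) (J J' : mp -> Prop) m :
  (forall q, J q <-> J' q) -> in_ideal le J m <-> in_ideal le J' m.
Proof.
by move=> H; split=> -[p [m0 [Jp ? ? ? ?]]]; exists p, m0; split => //; apply/H.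
Qed.

End Ideals.
Arguments gen_comb {R I} L c.

Section IdealComposition.
Variables (R : numClosedFieldType) (n : nat).
Local Notation mp := (mpoly R 'I_n).

Lemma ideal_comp_transfer (L1 L2 : seq mp) (U T : 'M[R]_n) q :
  U \in unitmx ->
  (forall j : 'I_(size L2), exists d : 'I_(size L1) -> R,
     forall W, mpeval (nth [::] L2 j) W = \sum_i d i * mpeval (nth [::] L1 i) (mxapp U W)) ->
  ideal_comp (in_ideal_gen L2) T q -> ideal_comp (in_ideal_gen L1) (U *m T) q.
Proof.
move=> UU /fin_all_exists [d Hd] [p [/in_ideal_genP [c Hc] Hq]].
pose c' i := mpsum [seq mpscale (d j i) (subst (c j) (invmx U)) | j <- enum 'I_(size L2)].
exists (gen_comb L1 c'); split; first exact: in_ideal_gen_comb.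
apply: mpeq_of_eval => Z; rewrite (mpeq_eval Hq) !mpeval_subst mpeval_gen_comb Hc mxappM.
under eq_bigr => j _ do rewrite Hd mulr_sumr.
rewrite exchange_big; apply: eq_bigr => i _.
rewrite mpeval_lincomb mulr_suml; apply: eq_bigr => j _.
by rewrite mpeval_subst -!mxappM mulKmx //; ring.
Qed.

Lemma gin_eq_of_ideal_comp (le : mono 'I_n -> mono 'I_n -> Prop) (J1 J2 : mp -> Prop)
    (S : 'M[R]_n) (M1 M2 : mono 'I_n -> Prop) :
  S \in unitmx -> is_gin le J1 M1 -> is_gin le J2 M2 ->
  (forall T q, ideal_comp J2 T q <-> ideal_comp J1 (S *m T) q) ->
  forall m, M1 m <-> M2 m.
Proof.
move=> US [D1 [D1nz gin1]] [D2 [D2nz gin2]] EJ m.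
have [T [T0 D2T D1ST]] := exists_generic_mx US D1nz D2nz.
have ST0 : \det (S *m T) != 0 by rewrite det_mulmx mulf_neq0 // -unitfE -unitmxE.
rewrite -(gin1 _ ST0 D1ST) -(gin2 _ T0 D2T).
by apply: in_ideal_iff => q; rewrite EJ.
Qed.

End IdealComposition.

Section Polarization.
Variable R : numClosedFieldType.

Definition circ_pt (k : nat) : R := (k%:R + 'i) / (k%:R - 'i).

Lemma circ_pt_den_neq0 k : (k%:R - 'i != 0 :> R) /\ (k%:R + 'i != 0 :> R).
Proof.
have E : (k%:R - 'i) * (k%:R + 'i) = ((k * k + 1)%N%:R : R).
  by rewrite natrD natrM mulrDr !mulrBl -expr2 sqrCi; ring.
have : ((k * k + 1)%N%:R : R) != 0 by rewrite pnatr_eq0 addn1.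
by rewrite -E mulf_eq0 negb_or => /andP.
Qed.

Lemma circ_pt_norm k : circ_pt k * (circ_pt k)^* = 1.
Proof.
have [H1 H2] := circ_pt_den_neq0 k.
rewrite /circ_pt fmorph_div rmorphD rmorphB /= conjC_nat conjCi opprK.
by field; rewrite H1 H2.
Qed.

Lemma circ_pt_inj : injective circ_pt.
Proof.
move=> u v E; have [Hu1 Hu2] := circ_pt_den_neq0 u; have [Hv1 Hv2] := circ_pt_den_neq0 v.
move/eqP: E; rewrite /circ_pt eqr_div // => /eqP E.
have : ('i : R) *+ 2 * ((v%:R : R) - u%:R) = 0.
  transitivity (((u%:R : R) + 'i) * (v%:R - 'i) - (v%:R + 'i) * (u%:R - 'i)); first by ring.
  by rewrite E subrr.
by move/eqP; rewrite mulf_eq0 mulrn_eq0 (negbTE (neq0Ci R)) /= subr_eq0 eqr_nat => /eqP.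
Qed.

Definition poly_dilate (P : {poly R}) (w : R) : {poly R} := \poly_(i < size P) (P`_i * w ^+ i).

Lemma coef_poly_dilate P w i : (poly_dilate P w)`_i = P`_i * w ^+ i.
Proof.
rewrite coef_poly; case: ltnP => // H.
by rewrite (leq_sizeP _ _ (leqnn _) _ H) mul0r.
Qed.

Lemma horner_poly_dilate P w x : (poly_dilate P w).[x] = P.[w * x].
Proof.
rewrite (horner_coef_wide _ (size_poly _ _)) (horner_coef_wide _ (leqnn _)).
by apply: eq_bigr => i _; rewrite coef_poly_dilate exprMn mulrA.
Qed.

Section SesquiPoly.
Variables (J : finType) (P Q : J -> {poly R}).
Hypothesis PQ0 : forall s, \sum_j (P j).[s] * (Q j).[s^*] = 0.

Lemma sesq_poly_diag_sum w m :
  \sum_j \sum_(u < m.+1) (P j)`_u * (Q j)`_(m - u) * (w ^+ u * w^* ^+ (m - u)) = 0.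
Proof.
set S := \sum_j poly_dilate (P j) w * poly_dilate (Q j) w^*.
have S0 : S = 0.
  apply: poly_eq0_of_nat_roots => x; rewrite horner_sum -[RHS](PQ0 (w * x%:R)).
  apply: eq_bigr => j _.
  by rewrite hornerM !horner_poly_dilate rmorphM /= conjC_nat.
rewrite -[RHS](coef0 _ m) -S0 coef_sum; apply: eq_bigr => j _.
by rewrite coefM; apply: eq_bigr => u _; rewrite !coef_poly_dilate; ring.
Qed.

(* A sesquilinear polynomial identity in s and s^* forces all its coefficients to vanish:
   on the unit circle s^* = s^-1, which separates the degrees of the monomials. *)
Lemma sesq_poly_coef_eq0 a b : \sum_j (P j)`_a * (Q j)`_b = 0.
Proof.
set c := fun u v => \sum_j (P j)`_u * (Q j)`_v; set m := (a + b)%N.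
set C : {poly R} := \sum_(u < m.+1) c u (m - u)%N *: 'X^(2 * u).
have C0 : C = 0.
  apply: (poly_eq0_of_roots circ_pt_inj (leqnn _)) => kk _.
  move: (circ_pt_norm kk); set w := circ_pt kk; clearbody w => Hw.
  transitivity (w ^+ m * \sum_j \sum_(u < m.+1)
                  (P j)`_u * (Q j)`_(m - u) * (w ^+ u * w^* ^+ (m - u))); last first.
    by rewrite sesq_poly_diag_sum mulr0.
  rewrite horner_sum exchange_big mulr_sumr; apply: eq_bigr => u _.
  rewrite hornerZ hornerXn /c mulr_suml mulr_sumr; apply: eq_bigr => j _.
  have Hu : (u <= m)%N by rewrite -ltnS.
  have -> : w ^+ m = w ^+ u * w ^+ (m - u) by rewrite -exprD subnKC.
  have -> : w ^+ (2 * u) = w ^+ u * w ^+ u * (w * w^*) ^+ (m - u)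
    by rewrite Hw expr1n mulr1 -exprD addnn -mul2n.
  by rewrite exprMn; ring.
have := congr1 (fun p : {poly R} => p`_(2 * a)) C0; rewrite /= coef0 /C coef_sum.
have Ha : (a < m.+1)%N by rewrite ltnS leq_addr.
rewrite (bigD1 (Ordinal Ha)) //= coefZ coefXn eqxx mulr1 big1 ?addr0 /m ?addKn //.
move=> u Hu; rewrite coefZ coefXn eqn_pmul2l // -[a]/(val (Ordinal Ha)) val_eqE.
by rewrite eq_sym (negbTE Hu) mulr0.
Qed.

End SesquiPoly.
End Polarization.

Section HermitianForms.
Variables (R : numClosedFieldType) (I : finType).
Implicit Types (h : mpoly R I) (Z V W : I -> R) (s : R).

Definition line_poly (h : mpoly R I) (Z V : I -> R) : {poly R} :=
  \sum_(t <- h) t.1 *: \prod_i ((Z i)%:P + V i *: 'X) ^+ t.2 i.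

Lemma horner_line_poly h Z V s : (line_poly h Z V).[s] = mpeval h (fun i => Z i + s * V i).
Proof.
rewrite /line_poly horner_sum mpevalE; apply: eq_bigr => t _.
rewrite hornerZ horner_prod /mmon; congr (_ * _); apply: eq_bigr => i _.
by rewrite horner_exp hornerD hornerC hornerZ hornerX mulrC.
Qed.

Lemma horner_conj_line_poly h Z V s :
  (map_poly Num.conj (line_poly h Z V)).[s^*] = (mpeval h (fun i => Z i + s * V i))^*.
Proof. by rewrite (horner_map Num.conj) /= horner_line_poly. Qed.

Lemma line_poly_at0 h Z V : mpeval h (fun i => Z i + 0 * V i) = mpeval h Z.
Proof. by congr mpeval; apply: functional_extensionality => i; rewrite mul0r addr0. Qed.

Lemma line_poly_at1 h Z W : mpeval h (fun i => Z i + 1 * (W i - Z i)) = mpeval h W.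
Proof. by congr mpeval; apply: functional_extensionality => i; rewrite mul1r addrC subrK. Qed.

Section Forms.
Variables (J : finType) (e : J -> R) (h : J -> mpoly R I).

Definition polar_form (Z W : I -> R) : R := \sum_j e j * mpeval (h j) W * (mpeval (h j) Z)^*.

(* Restricting to the line through Z and W reduces polarization to sesq_poly_coef_eq0. *)
Lemma polar_form_eq0 : (forall Z, polar_form Z Z = 0) -> forall Z W, polar_form Z W = 0.
Proof.
move=> H Z W; set V := fun i => W i - Z i.
pose P j := e j *: line_poly (h j) Z V.
pose Q j := map_poly Num.conj (line_poly (h j) Z V).
have PQ0 s : \sum_j (P j).[s] * (Q j).[s^*] = 0.
  rewrite -[RHS](H (fun i => Z i + s * V i)); apply: eq_bigr => j _.
  by rewrite hornerZ horner_line_poly horner_conj_line_poly.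
have E : \sum_j (Q j)`_0 *: P j = 0.
  apply/polyP => a; rewrite coef0 coef_sum -[RHS](sesq_poly_coef_eq0 PQ0 a 0).
  by apply: eq_bigr => j _; rewrite coefZ mulrC.
have := congr1 (horner^~ 1) E; rewrite horner0 horner_sum => <-.
apply: eq_bigr => j _; rewrite /Q coef_map /= -horner_coef0 horner_line_poly line_poly_at0.
by rewrite !hornerZ horner_line_poly line_poly_at1 mulrC mulrA.
Qed.

End Forms.

Definition mp_indep (J : finType) (h : J -> mpoly R I) :=
  forall c : J -> R, (forall x, \sum_j c j * mpeval (h j) x = 0) -> forall j, c j = 0.

Lemma indep_dual_points (J : finType) (h : J -> mpoly R I) : mp_indep h ->
  exists N (x : 'I_N -> I -> R) (Y : 'M[R]_(N, #|J|)),
    forall j j', \sum_l (mpeval (h j') (x l))^* * Y l (enum_rank j) = (j' == j)%:R.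
Proof.
move=> Hind; pose K := (\max_j max_exp (h j)).+1; pose N := (K ^ #|I|)%N.
have HK j : exps_below K (h j) by apply: exps_below_max_exp; rewrite ltnS (leq_bigmax j).
pose x (l : 'I_N) := @kron_pt R I K l%:R.
pose V : 'M[R]_(#|J|, N) := \matrix_(j, l) (mpeval (h (enum_val j)) (x l))^*.
have : row_free V.
  rewrite -kermx_eq0; apply/rowV0P => v /sub_kermxP Hv.
  pose c j := (v 0 (enum_rank j))^*.
  have Hc z : \sum_j c j * mpeval (h j) z = 0.
    rewrite -mpeval_lincomb; apply: (@mpeval_eq0_on_kron_grid _ _ K).
      by move=> t /flattenP [s /mapP [j _ ->]] /mapP [t' Ht' ->]; exact: HK Ht'.
    move=> k Hk; rewrite mpeval_lincomb (reindex _ (onW_bij _ (@enum_val_bij J))) /=.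
    have := congr1 (fun M : 'M[R]_(1, N) => (M 0 (Ordinal Hk))^*) Hv.
    rewrite /= !mxE rmorph0 rmorph_sum /= => E; rewrite -[RHS]E; apply: eq_bigr => i _.
    by rewrite /c enum_valK mxE rmorphM /= conjCK mulrC.
  apply/matrixP => i j; rewrite ord1 mxE; apply/eqP.
  by rewrite -conjC_eq0 -(enum_valK j); apply/eqP; apply: (Hind c Hc).
case/row_freeP => Y HY; exists N, x, Y => j j'.
have := congr1 (fun M : 'M[R]_#|J| => M (enum_rank j') (enum_rank j)) HY.
rewrite /= !mxE (inj_eq enum_rank_inj) => <-.
by apply: eq_bigr => l _; rewrite mxE enum_rankK.
Qed.

(* Pairing the polarized identity with the dual points of b isolates be_j b_j(W)
   as a combination of the a_i(W). *)
Lemma polar_form_span (Ja Jb : finType) (al : Ja -> R) (a : Ja -> mpoly R I)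
    (be : Jb -> R) (b : Jb -> mpoly R I) :
  (forall Z W, polar_form al a Z W = polar_form be b Z W) ->
  (forall j, be j != 0) -> mp_indep b ->
  forall j, exists d : Ja -> R, forall W, mpeval (b j) W = \sum_i d i * mpeval (a i) W.
Proof.
move=> Hab be0 Hind j; have [N [x [Y HY]]] := indep_dual_points Hind.
exists (fun i => (be j)^-1 * (al i * \sum_l (mpeval (a i) (x l))^* * Y l (enum_rank j))) => W.
apply: (mulfI (be0 j)); rewrite [RHS]mulr_sumr.
have -> : be j * mpeval (b j) W = \sum_l Y l (enum_rank j) * polar_form be b (x l) W.
  have Hsum j' : \sum_l Y l (enum_rank j) * (be j' * mpeval (b j') W * (mpeval (b j') (x l))^*)
                 = be j' * mpeval (b j') W * (j' == j)%:R.
    by rewrite -HY mulr_sumr; apply: eq_bigr => l _; ring.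
  under [RHS]eq_bigr => l _ do rewrite /polar_form mulr_sumr.
  rewrite exchange_big /=; under eq_bigr => j' _ do rewrite Hsum.
  rewrite (bigD1 j) //= eqxx mulr1 big1 ?addr0 // => j' /negbTE ->.
  by rewrite mulr0.
under eq_bigr => l _ do rewrite -Hab /polar_form mulr_sumr.
rewrite exchange_big /=; apply: eq_bigr => i _.
rewrite mulrA mulrA mulfV ?be0 // mul1r.
transitivity (al i * mpeval (a i) W *
              \sum_l (mpeval (a i) (x l))^* * Y l (enum_rank j)); last by ring.
by rewrite mulr_sumr; apply: eq_bigr => l _; ring.
Qed.

End HermitianForms.

Section HermitianNorm.
Variables (R : numClosedFieldType) (n b : nat).

Lemma hnorm_neq0 : (0 < n)%N -> exists Z0 : 'I_n -> R, hnorm b Z0 != 0.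
Proof.
move=> n_gt0; set i0 := Ordinal n_gt0; exists (fun i => ((i == i0)%:R : R)).
rewrite /hnorm (bigD1 i0) //= big1 ?addr0 => [|i /negbTE ->]; last by rewrite mul0r mulr0.
by rewrite !mulf_neq0 ?conjC_eq0 ?oppr_eq0 ?oner_eq0.
Qed.

(* Along the real line Z0 + x (Z - Z0) both factors are polynomials in x, and the first one
   does not vanish at x = 0. *)
Lemma polar_form_diag_eq0 (J : finType) (e : J -> R) (h : J -> mpoly R 'I_n) :
  (0 < n)%N -> (forall Z, hnorm b Z * polar_form e h Z Z = 0) ->
  forall Z, polar_form e h Z Z = 0.
Proof.
move=> n_gt0 H Z; have [Z0 HZ0] := hnorm_neq0 n_gt0; set V := fun i => Z i - Z0 i.
pose sg (i : 'I_n) : R := if (i <= b)%N then -1 else 1.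
pose Hp := \sum_i sg i *: (((Z0 i)%:P + V i *: 'X) * (((Z0 i)^*)%:P + (V i)^* *: 'X)).
pose Pp := \sum_j e j *: (line_poly (h j) Z0 V * map_poly Num.conj (line_poly (h j) Z0 V)).
have Hp_real x : x^* = x -> Hp.[x] = hnorm b (fun i => Z0 i + x * V i).
  move=> Hx; rewrite horner_sum; apply: eq_bigr => i _.
  rewrite hornerZ hornerM !hornerD !hornerC !hornerZ !hornerX.
  by rewrite [x * V i]mulrC [(Z0 i + _)^*]rmorphD rmorphM /= Hx.
have Pp_real x : x^* = x -> Pp.[x] = polar_form e h (fun i => Z0 i + x * V i)
                                                   (fun i => Z0 i + x * V i).
  move=> Hx; rewrite horner_sum; apply: eq_bigr => j _.
  by rewrite hornerZ hornerM -{2}Hx horner_conj_line_poly horner_line_poly mulrA.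
have at0 : (fun i => Z0 i + 0 * V i) = Z0.
  by apply: functional_extensionality => i; rewrite mul0r addr0.
have at1 : (fun i => Z0 i + 1 * V i) = Z.
  by apply: functional_extensionality => i; rewrite mul1r /V addrC subrK.
have Hp0 : Hp != 0.
  by apply: contraNneq HZ0 => Hp0; rewrite -at0 -Hp_real ?rmorph0 // Hp0 horner0.
have Pp0 : Pp = 0.
  have : Hp * Pp = 0.
    apply: poly_eq0_of_nat_roots => k.
    by rewrite hornerM Hp_real ?conjC_nat // Pp_real ?conjC_nat // H.
  by move/eqP; rewrite mulf_eq0 (negbTE Hp0) => /eqP.
by move: (Pp_real 1 (rmorph1 _)); rewrite Pp0 horner0 at1 => <-.
Qed.

Lemma polar_forms_eq (Ja Jb : finType) (al : Ja -> R) (a : Ja -> mpoly R 'I_n)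
    (be : Jb -> R) (bb : Jb -> mpoly R 'I_n) :
  (0 < n)%N ->
  (forall Z, hnorm b Z * (polar_form al a Z Z - polar_form be bb Z Z) = 0) ->
  forall Z W, polar_form al a Z W = polar_form be bb Z W.
Proof.
move=> n_gt0 H Z W; apply/eqP; rewrite -subr_eq0; apply/eqP.
pose e (s : Ja + Jb) := match s with inl i => al i | inr j => - be j end.
pose h (s : Ja + Jb) := match s with inl i => a i | inr j => bb j end.
have eh Z' W' : polar_form e h Z' W' = polar_form al a Z' W' - polar_form be bb Z' W'.
  rewrite /polar_form big_sumType /= -sumrN; congr (_ + _).
  by apply: eq_bigr => j _; rewrite !mulNr.
rewrite -eh; apply: polar_form_eq0; apply: polar_form_diag_eq0 => // Z'.
by rewrite eh; apply: H.
Qed.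

End HermitianNorm.

Section Decompositions.
Variables (R : numClosedFieldType) (I : finType).
Local Notation mp := (mpoly R I).

Definition decomp_sign (hp : seq mp) (i : nat) : R := if (i < size hp)%N then 1 else -1.

Lemma decomp_sign_neq0 hp i : decomp_sign hp i != 0.
Proof. by rewrite /decomp_sign; case: ifP => _; rewrite ?oppr_eq0 oner_eq0. Qed.

Lemma sum_decomp_sign (hp hm : seq mp) (f : mp -> R) :
  \sum_(h <- hp) f h - \sum_(h <- hm) f h =
  \sum_(i < size (hp ++ hm)) decomp_sign hp i * f (nth [::] (hp ++ hm) i).
Proof.
rewrite -(big_mkord xpredT (fun i => decomp_sign hp i * f (nth [::] (hp ++ hm) i))).
rewrite (@big_cat_nat _ _ _ (size hp)) ?size_cat ?leq_addr //=; congr (_ + _).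
  rewrite (big_nth [::]) !big_nat; apply: eq_bigr => i /andP [_ Hi].
  by rewrite /decomp_sign Hi nth_cat Hi mul1r.
rewrite -{1}[size hp]add0n big_addn addKn -sumrN [in LHS](big_nth [::]) !big_nat.
apply: eq_bigr => i /andP [_ Hi].
by rewrite /decomp_sign nth_cat ltnNge leq_addl /= addnK mulN1r.
Qed.

Lemma mp_indep_nth (L : seq mp) :
  (forall cs : seq R, size cs = size L ->
     mpeq (mpsum [seq mpscale c.1 c.2 | c <- zip cs L]) [::] -> all (fun c => c == 0) cs) ->
  mp_indep (fun i : 'I_(size L) => nth [::] L i).
Proof.
move=> H c Hc j; set cs := [seq c i | i <- enum 'I_(size L)].
have Hs : size cs = size L by rewrite size_map size_enum_ord.
have Hm : mpeq (mpsum [seq mpscale x.1 x.2 | x <- zip cs L]) [::].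
  apply: mpeq_of_eval => Z; rewrite mpeval0 mpeval_sum big_map.
  rewrite (big_nth (0, [::])) size_zip Hs minnn big_mkord -[RHS](Hc Z).
  apply: eq_bigr => i _; rewrite nth_zip // mpeval_scale /=.
  by rewrite (nth_map i) ?size_enum_ord // nth_ord_enum.
have /allP /(_ (c j)) := H cs Hs Hm.
by rewrite map_f ?mem_enum // => /(_ isT) /eqP.
Qed.

End Decompositions.

Lemma mp_indep_subst (R : numClosedFieldType) (n : nat) (J : finType)
    (h : J -> mpoly R 'I_n) (T : 'M[R]_n) :
  T \in unitmx -> mp_indep h -> mp_indep (fun j => subst (h j) T).
Proof.
move=> UT Hind c Hc; apply: Hind => W; have := Hc (mxapp (invmx T) W).
by under eq_bigr => j _ do rewrite mpeval_subst mxappKV //.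
Qed.

Section QuotientComposition.
Variables (R : numClosedFieldType) (a b A B : nat).
Local Notation n := (a + b + 1)%N.
Local Notation N := (A + B + 1)%N.
Variables (F G : 'I_N -> mpoly R 'I_n) (tau : 'M[R]_n) (chi : 'M[R]_N) (lt lc : R).
Variables (hpF hmF hpG hmG : seq (mpoly R 'I_n)).
Local Notation hF := (hpF ++ hmF).
Local Notation hG := (hpG ++ hmG).
Hypothesis Utau : tau \in unitmx.
Hypotheses (lt0 : lt != 0) (Hlt : forall Z, hnorm b (mxapp tau Z) = lt * hnorm b Z).
Hypotheses (lc0 : lc != 0) (Hlc : forall Z, hnorm B (mxapp chi Z) = lc * hnorm B Z).
Hypothesis Hcomp : forall Z, mapeval F (mxapp tau Z) = mxapp chi (mapeval G Z).
Hypotheses (HdF : holo_decomp_quot b B F hpF hmF) (HdG : holo_decomp_quot b B G hpG hmG).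

Let alF (i : 'I_(size hF)) := lt * decomp_sign hpF i.
Let hFtau (i : 'I_(size hF)) := subst (nth [::] hF i) tau.
Let beG (j : 'I_(size hG)) := lc * decomp_sign hpG j.
Let hGj (j : 'I_(size hG)) := nth [::] hG j.

Lemma quotient_comp_relation Z :
  hnorm b Z * (polar_form alF hFtau Z Z - polar_form beG hGj Z Z) = 0.
Proof.
case: HdF => _ _ EqF; case: HdG => _ _ EqG.
have qF : polar_form alF hFtau Z Z =
    lt * (\sum_(h <- hpF) mpeval h (mxapp tau Z) * (mpeval h (mxapp tau Z))^*
          - \sum_(h <- hmF) mpeval h (mxapp tau Z) * (mpeval h (mxapp tau Z))^*).
  rewrite sum_decomp_sign mulr_sumr; apply: eq_bigr => i _.
  by rewrite /alF /hFtau mpeval_subst; ring.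
have qG : polar_form beG hGj Z Z =
    lc * (\sum_(h <- hpG) mpeval h Z * (mpeval h Z)^*
          - \sum_(h <- hmG) mpeval h Z * (mpeval h Z)^*).
  by rewrite sum_decomp_sign mulr_sumr; apply: eq_bigr => j _; rewrite /beG; ring.
have := EqF (mxapp tau Z); rewrite Hcomp Hlc EqG Hlt qF qG => E.
by apply/eqP; rewrite mulrBr subr_eq0 [X in _ == X]mulrCA E; apply/eqP; ring.
Qed.

Lemma holo_decomp_comp_span :
  (forall j : 'I_(size hG), exists d : 'I_(size hF) -> R,
     forall W, mpeval (nth [::] hG j) W = \sum_i d i * mpeval (nth [::] hF i) (mxapp tau W)) /\
  (forall i : 'I_(size hF), exists d : 'I_(size hG) -> R,
     forall W, mpeval (nth [::] hF i) W =
               \sum_j d j * mpeval (nth [::] hG j) (mxapp (invmx tau) W)).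
Proof.
case: HdF => _ IndF _; case: HdG => _ IndG _.
have n_gt0 : (0 < n)%N by rewrite addn1.
have Hpol := polar_forms_eq n_gt0 quotient_comp_relation.
split=> [j | i].
  have [d Hd] := polar_form_span Hpol (fun j => mulf_neq0 lc0 (decomp_sign_neq0 _ _))
                                 (mp_indep_nth IndG) j.
  by exists d => W; rewrite [LHS]Hd; apply: eq_bigr => i _; rewrite mpeval_subst.
have [d Hd] := polar_form_span (fun Z W => esym (Hpol Z W))
                 (fun i => mulf_neq0 lt0 (decomp_sign_neq0 _ _))
                 (mp_indep_subst Utau (mp_indep_nth IndF)) i.
by exists d => W; have := Hd (mxapp (invmx tau) W); rewrite mpeval_subst mxappKV.
Qed.

End QuotientComposition.

Theorem mainTheorem3 (R : numClosedFieldType) (a b A B : nat)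
  (le : mono 'I_(a + b + 1) -> mono 'I_(a + b + 1) -> Prop)
  (Hle : monomial_order le) (Hvars : vars_ordered le)
  (F G : 'I_(A + B + 1) -> mpoly R 'I_(a + b + 1))
  (HF : hom_map F) (HG : hom_map G)
  (HFQ : maps_HQ b B F) (HGQ : maps_HQ b B G)
  (tau : 'M[R]_(a + b + 1)) (chi : 'M[R]_(A + B + 1))
  (Htau : isAutHQ b tau) (Hchi : isAutHQ B chi)
  (Hcomp : forall Z, mapeval F (mxapp tau Z) = mxapp chi (mapeval G Z))
  (hpF hmF hpG hmG : seq (mpoly R 'I_(a + b + 1)))
  (HdF : holo_decomp_quot b B F hpF hmF) (HdG : holo_decomp_quot b B G hpG hmG)
  (M1 M2 : mono 'I_(a + b + 1) -> Prop)
  (H1 : is_gin le (in_ideal_gen (hpF ++ hmF)) M1)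
  (H2 : is_gin le (in_ideal_gen (hpG ++ hmG)) M2) :
  forall m, M1 m <-> M2 m.
Proof.
case: Htau => Utau [lt [_ lt0 Hlt]]; case: Hchi => _ [lc [_ lc0 Hlc]].
have [spanG spanF] := holo_decomp_comp_span Utau lt0 Hlt lc0 Hlc Hcomp HdF HdG.
apply: (gin_eq_of_ideal_comp Utau H1 H2) => T q; split; first exact: ideal_comp_transfer.
by move/(ideal_comp_transfer _ spanF); rewrite unitmx_inv mulKmx //; apply.
Qed.
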